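(* Let $(S,\mathcal{S})$ be a measurable space and let $\mathcal{E}\subseteq\mathcal{P}(S)$ be a $\cap$-stable collection with $\sigma(\mathcal{E})=\mathcal{S}$, $\emptyset\in\mathcal{E}$ and $\mathcal{E}\subseteq (\mathcal{E}_{int})_{\sigma}$. If $\pi$ is a constructive cr-set, then for every $A\in\mathcal{S}$ there exist $K\in (\mathcal{E}_{int})_{\sigma}$ and $L\in(\mathcal{E}_{ext})_{\delta}$ with $K\subseteq A\subseteq L$ and $T_{\pi}(L\setminus K)=0$.
   Context: $(\Omega,\mathcal{F},P)$ is a probability space; $C(S)$ is the set of countable subsets of $S$; $N_A(M)=|A\cap M|$; $\mathcal{C}(\mathcal{S})=\sigma(N_A\mid A\in\mathcal{S})$; a cr-set is an $\mathcal{F}$-$\mathcal{C}(\mathcal{S})$ measurable map $\pi:\Omega\to C(S)$, finite if its values are finite; a map $\tau:\Omega\to C(S)$ is constructive if $\tau(\omega)=\bigcup_k\pi_k(\omega)$ for all $\omega$ for some finite cr-sets $\pi_k$, $k\in\mathbb{N}$. The hitting function is $T_\pi(A)=P(\pi\cap A\neq\emptyset)$, $A\in\mathcal{S}$. For a nonempty family $\mathcal{E}$: $\mathcal{E}_\sigma$ (resp. $\mathcal{E}_\delta$) is the family of countable unions (resp. intersections) of $\mathcal{E}$-sets, the empty union/intersection not included; $\mathcal{E}_{ext}=\mathcal{E}_\sigma$; $\mathcal{E}_{int}=\{\bigcap_n (S\setminus E_n)\mid E_n\in\mathcal{E}\}$. *)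

From Stdlib Require Import Reals List.
Open Scope R_scope.

Definition set (X : Type) := X -> Prop.

Definition setT {X : Type} : set X := fun _ => True.
Definition setI {X : Type} (A B : set X) : set X := fun x => A x /\ B x.
Definition setD {X : Type} (A B : set X) : set X := fun x => A x /\ ~ B x.
Definition subset {X : Type} (A B : set X) : Prop := forall x, A x -> B x.

Definition sigma_algebra {X : Type} (G : set (set X)) : Prop :=
  G setT /\
  (forall A, G A -> G (fun x => ~ A x)) /\
  (forall A : nat -> set X, (forall n, G (A n)) -> G (fun x => exists n, A n x)).

Definition sigma_gen {X : Type} (E : set (set X)) : set (set X) :=
  fun A => forall G, sigma_algebra G -> (forall B, E B -> G B) -> G A.

Definition is_probability {Om : Type} (F : set (set Om)) (P : set Om -> R) : Prop :=
  sigma_algebra F /\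
  (forall A, F A -> 0 <= P A) /\
  P setT = 1 /\
  (forall B : nat -> set Om, (forall n, F (B n)) ->
     (forall m n, m <> n -> forall x, B m x -> B n x -> False) ->
     infinite_sum (fun n => P (B n)) (P (fun x => exists n, B n x))).

Definition countable_set {X : Type} (M : set X) : Prop :=
  exists f : X -> nat, forall x y, M x -> M y -> f x = f y -> x = y.

Definition finite_set {X : Type} (M : set X) : Prop :=
  exists l : list X, forall x, M x <-> In x l.

Definition CS (X : Type) := { M : set X | countable_set M }.

(* cardinality |D| in {0,1,...} U {oo}; None encodes oo *)
Definition card_ge {X : Type} (D : set X) (n : nat) : Prop :=
  exists l : list X, NoDup l /\ length l = n /\ forall x, In x l -> D x.

Definition Ncard {X : Type} (D : set X) (k : option nat) : Prop :=
  match k with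
  | None => forall n, card_ge D n
  | Some n => card_ge D n /\ ~ card_ge D (Datatypes.S n)
  end.

(* generators of C(S) = sigma(N_A | A in SS): preimages N_A^{-1}(B),
   B an arbitrary subset of {0,1,...,oo} (discrete sigma-algebra) *)
Definition CS_gens {X : Type} (SS : set (set X)) : set (set (CS X)) :=
  fun B => exists A, SS A /\ exists K : set (option nat),
    forall M : CS X, B M <-> exists k, Ncard (setI A (proj1_sig M)) k /\ K k.

Definition CS_alg {X : Type} (SS : set (set X)) : set (set (CS X)) :=
  sigma_gen (CS_gens SS).

Definition is_cr_set {Om X : Type} (F : set (set Om)) (SS : set (set X))
  (pi : Om -> CS X) : Prop :=
  forall B, CS_alg SS B -> F (fun w => B (pi w)).

Definition is_finite_cr_set {Om X : Type} (F : set (set Om)) (SS : set (set X))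
  (pi : Om -> CS X) : Prop :=
  is_cr_set F SS pi /\ forall w, finite_set (proj1_sig (pi w)).

Definition constructive {Om X : Type} (F : set (set Om)) (SS : set (set X))
  (tau : Om -> CS X) : Prop :=
  exists pik : nat -> Om -> CS X,
    (forall k, is_finite_cr_set F SS (pik k)) /\
    forall w x, proj1_sig (tau w) x <-> exists k, proj1_sig (pik k w) x.

Definition hitting {Om X : Type} (P : set Om -> R) (pi : Om -> CS X) (A : set X) : R :=
  P (fun w => exists x, proj1_sig (pi w) x /\ A x).

(* E_sigma, E_delta (countable, nonempty families: nat-indexed sequences) *)
Definition fam_sigma {X : Type} (E : set (set X)) : set (set X) :=
  fun A => exists f : nat -> set X, (forall n, E (f n)) /\
    forall x, A x <-> exists n, f n x.

Definition fam_delta {X : Type} (E : set (set X)) : set (set X) :=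
  fun A => exists f : nat -> set X, (forall n, E (f n)) /\
    forall x, A x <-> forall n, f n x.

Definition fam_ext {X : Type} (E : set (set X)) : set (set X) := fam_sigma E.

Definition fam_int {X : Type} (E : set (set X)) : set (set X) :=
  fun A => exists f : nat -> set X, (forall n, E (f n)) /\
    forall x, A x <-> forall n, ~ f n x.

From Stdlib Require Import Reals Lra Lia Classical FunctionalExtensionality
  PropExtensionality IndefiniteDescription Cantor List.
Open Scope R_scope.

(* Call D null if every finite cr-set pi_k hits D with probability 0, and call A
   approximable if K <= A <= L for some K in (E_int)_sigma and L in (E_ext)_delta
   with L \ K null.  The approximable sets form a sigma-algebra containing E:
   - for A in E take K = L = A (using E <= (E_int)_sigma);
   - complementation swaps the roles of K and L, since it exchanges
     (E_int)_sigma and (E_ext)_delta;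
   - for a countable union take K = U_n K_n; the outer set comes from
     [outer_envelope]: writing L_n as a decreasing intersection of sets U_{n,m}
     in E_sigma, finiteness of each pi_k and continuity of P from above give
     stages m(n,j) such that L, the intersection over j of the unions over n of
     U_{n,m(n,j)}, exceeds U_n L_n only by a null set.
   Hence every A in sigma(E) is approximable, and T_pi(L \ K) = 0 follows by
   countable subadditivity over k. *)

Lemma set_ext {X : Type} (A B : set X) : (forall x, A x <-> B x) -> A = B.
Proof.
  intros H; apply functional_extensionality; intros x.
  apply propositional_extensionality; auto.
Qed.

Section SigmaAlgebra.
Variables (X : Type) (G : set (set X)).
Hypothesis HG : sigma_algebra G.

Lemma sa_compl A : G A -> G (fun x => ~ A x).
Proof. apply HG. Qed.

Lemma sa_union (A : nat -> set X) : (forall n, G (A n)) -> G (fun x => exists n, A n x).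
Proof. apply HG. Qed.

Lemma sa_empty : G (fun _ => False).
Proof.
  replace (fun _ : X => False) with (fun x => ~ (@setT X) x).
  - apply sa_compl, HG.
  - apply set_ext; unfold setT; tauto.
Qed.

Lemma sa_inter (A : nat -> set X) : (forall n, G (A n)) -> G (fun x => forall n, A n x).
Proof.
  intros H.
  replace (fun x => forall n, A n x) with (fun x => ~ exists n, ~ A n x).
  - apply sa_compl, sa_union; intros; apply sa_compl, H.
  - apply set_ext; intros x; split.
    + intros Hx n; apply NNPP; intros Hn; apply Hx; eauto.
    + intros Hx [n Hn]; auto.
Qed.

Lemma sa_inter2 A B : G A -> G B -> G (fun x => A x /\ B x).
Proof.
  intros HA HB.
  replace (fun x => A x /\ B x)
    with (fun x => forall n, (match n with O => A | _ => B end) x).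
  - apply sa_inter; intros [|n]; auto.
  - apply set_ext; intros x; split.
    + intros H; split; [apply (H O) | apply (H 1%nat)].
    + intros [H1 H2] [|n]; auto.
Qed.

Lemma sa_diff A B : G A -> G B -> G (setD A B).
Proof. intros; apply sa_inter2; auto; apply sa_compl; auto. Qed.

End SigmaAlgebra.

Definition first_entry {X : Type} (B : nat -> set X) (n : nat) : set X :=
  fun x => B n x /\ forall i, (i < n)%nat -> ~ B i x.

Lemma first_entry_disjoint {X : Type} (B : nat -> set X) m n :
  m <> n -> forall x, first_entry B m x -> first_entry B n x -> False.
Proof.
  intros Hmn x [Hm Hm'] [Hn Hn'].
  destruct (Nat.lt_gt_cases m n) as [[H | H] _]; auto.
  - exact (Hn' m H Hm).
  - exact (Hm' n H Hn).
Qed.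

Lemma first_entry_union {X : Type} (B : nat -> set X) x :
  (exists n, first_entry B n x) <-> exists n, B n x.
Proof.
  split; [intros [n [Hn _]]; eauto |].
  intros [n Hn]; revert Hn.
  induction n as [n IH] using (well_founded_induction Wf_nat.lt_wf); intros Hn.
  destruct (classic (forall i, (i < n)%nat -> ~ B i x)) as [Hfirst | Hearlier].
  - exists n; split; auto.
  - apply not_all_ex_not in Hearlier; destruct Hearlier as [i Hi].
    apply imply_to_and in Hi; destruct Hi as [Hi HBi].
    exact (IH i Hi (NNPP _ HBi)).
Qed.

Lemma first_entry_meas {X : Type} (G : set (set X)) (B : nat -> set X) :
  sigma_algebra G -> (forall n, G (B n)) -> forall n, G (first_entry B n).
Proof.
  intros HG HB n. unfold first_entry.
  apply sa_inter2; auto. apply sa_inter; auto. intros i.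
  destruct (Nat.lt_ge_cases i n) as [Hi | Hi].
  - replace (fun x => (i < n)%nat -> ~ B i x) with (fun x => ~ B i x).
    + apply sa_compl; auto.
    + apply set_ext; intros x; tauto.
  - replace (fun x => (i < n)%nat -> ~ B i x) with (@setT X).
    + apply HG.
    + apply set_ext; intros x; unfold setT; split; auto; intros; lia.
Qed.

Lemma infinite_sum_le (a : nat -> R) l C :
  infinite_sum a l -> (forall n, sum_f_R0 a n <= C) -> l <= C.
Proof.
  intros Hs HC. destruct (Rle_or_lt l C) as [| Hlt]; auto.
  destruct (Hs (l - C)) as [N HN]; [lra |].
  specialize (HN N (le_n _)). specialize (HC N). unfold R_dist in HN.
  apply Rabs_def2 in HN. lra.
Qed.

Section Probability.
Variables (Om : Type) (F : set (set Om)) (P : set Om -> R).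
Hypothesis HP : is_probability F P.

Lemma prob_sa : sigma_algebra F.
Proof. apply HP. Qed.

Lemma prob_ge0 A : F A -> 0 <= P A.
Proof. apply HP. Qed.

Lemma prob_sigma_add (B : nat -> set Om) : (forall n, F (B n)) ->
  (forall m n, m <> n -> forall x, B m x -> B n x -> False) ->
  infinite_sum (fun n => P (B n)) (P (fun x => exists n, B n x)).
Proof. apply HP. Qed.

Lemma prob_empty : P (fun _ => False) = 0.
Proof.
  assert (Hsum := prob_sigma_add (fun _ _ => False) (fun _ => sa_empty _ _ prob_sa)
                    (fun _ _ _ _ H _ => H)).
  cbv beta in Hsum.
  replace (fun _ : Om => exists _ : nat, False) with (fun _ : Om => False) in Hsum
    by (apply set_ext; firstorder).
  set (p := P (fun _ => False)) in *.
  assert (Hp : 0 <= p) by (apply prob_ge0, sa_empty, prob_sa).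
  destruct (Rle_lt_or_eq_dec _ _ Hp) as [Hlt |]; [| auto].
  (* the partial sums are (n+1) p, which cannot converge to p > 0 *)
  destruct (Hsum (p / 2)) as [N HN]; [lra |].
  assert (A1 := HN N (le_n _)). assert (A2 := HN (S N) (le_S _ _ (le_n _))).
  simpl in A2. unfold R_dist in *.
  apply Rabs_def2 in A1; apply Rabs_def2 in A2. lra.
Qed.

Lemma prob_add A B : F A -> F B -> (forall x, A x -> B x -> False) ->
  P (fun x => A x \/ B x) = P A + P B.
Proof.
  intros HA HB Hd.
  set (f := fun n => match n with O => A | 1%nat => B | _ => fun _ : Om => False end).
  assert (Hf : forall n, F (f n))
    by (intros [| [| n]]; simpl; auto; apply sa_empty, prob_sa).
  assert (Hdj : forall m n, m <> n -> forall x, f m x -> f n x -> False).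
  { intros [| [| m]] [| [| n]] Hmn x; simpl; try tauto; try lia; eauto. }
  assert (Hsum := prob_sigma_add f Hf Hdj).
  replace (fun x : Om => exists n, f n x) with (fun x => A x \/ B x) in Hsum.
  2:{ apply set_ext; intros x; split.
      - intros [H | H]; [exists O | exists 1%nat]; auto.
      - intros [[| [| n]] H]; simpl in H; tauto. }
  apply (uniqueness_sum _ _ _ Hsum).
  assert (Hpart : forall k, sum_f_R0 (fun n => P (f n)) (S k) = P A + P B).
  { induction k; simpl in *; [ring |]. rewrite IHk, prob_empty; ring. }
  intros eps Heps. exists 1%nat. intros [| n] Hn; [lia |].
  rewrite Hpart. unfold R_dist. rewrite Rminus_diag, Rabs_R0. auto.
Qed.

Lemma prob_split A B : F A -> F B ->
  P A = P (fun x => A x /\ B x) + P (setD A B).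
Proof.
  intros HA HB. rewrite <- prob_add.
  - f_equal; apply set_ext; intros x; unfold setD; tauto.
  - apply sa_inter2; auto; apply prob_sa.
  - apply sa_diff; auto; apply prob_sa.
  - unfold setD; tauto.
Qed.

Lemma prob_mono A B : F A -> F B -> subset A B -> P A <= P B.
Proof.
  intros HA HB Hs. rewrite (prob_split B A HB HA).
  replace (fun x => B x /\ A x) with A by (apply set_ext; firstorder).
  assert (0 <= P (setD B A)) by (apply prob_ge0, sa_diff; auto; apply prob_sa).
  lra.
Qed.

Lemma prob_union_le (B : nat -> set Om) (c : nat -> R) C : (forall n, F (B n)) ->
  (forall n, P (B n) <= c n) -> (forall n, sum_f_R0 c n <= C) ->
  P (fun x => exists n, B n x) <= C.
Proof.
  intros HB Hc HC.
  assert (HD := first_entry_meas F B prob_sa HB).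
  assert (Hsum := prob_sigma_add _ HD (first_entry_disjoint B)).
  replace (fun x => exists n, first_entry B n x) with (fun x => exists n, B n x) in Hsum
    by (apply set_ext; intros x; symmetry; apply first_entry_union).
  apply (infinite_sum_le _ _ _ Hsum). intros n.
  eapply Rle_trans; [| apply (HC n)].
  apply sum_Rle. intros i _. eapply Rle_trans; [| apply Hc].
  apply prob_mono; auto. intros x [H _]; auto.
Qed.

Lemma prob_null_union (B : nat -> set Om) : (forall n, F (B n)) ->
  (forall n, P (B n) = 0) -> P (fun x => exists n, B n x) = 0.
Proof.
  intros HB H0. apply Rle_antisym.
  - apply (prob_union_le B (fun _ => 0)); auto.
    + intros n; rewrite H0; lra.
    + intros n; rewrite sum_cte; lra.
  - apply prob_ge0, sa_union; auto; apply prob_sa.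
Qed.

Lemma prob_vanish (B : nat -> set Om) : (forall n, F (B n)) ->
  (forall n x, B (S n) x -> B n x) -> (forall x, ~ forall n, B n x) ->
  forall eps, eps > 0 -> exists M, forall m, (m >= M)%nat -> P (B m) < eps.
Proof.
  intros HB Hdec Hemp eps Heps.
  assert (Hmono : forall m n x, (m <= n)%nat -> B n x -> B m x)
    by (intros m n x Hmn; induction Hmn; auto).
  (* B 0 is the disjoint union of the rings D n = B n \ B (n+1) *)
  set (D := fun n => setD (B n) (B (S n))).
  assert (HD : forall n, F (D n)) by (intros; apply sa_diff; auto; apply prob_sa).
  assert (Hdj : forall m n, m <> n -> forall x, D m x -> D n x -> False).
  { intros m n Hmn x [Hm Hm'] [Hn Hn'].
    destruct (Nat.lt_gt_cases m n) as [[H | H] _]; auto.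
    - apply Hm'. apply (Hmono _ n); auto; lia.
    - apply Hn'. apply (Hmono _ m); auto; lia. }
  assert (Hsum := prob_sigma_add D HD Hdj).
  replace (fun x => exists n, D n x) with (B O) in Hsum.
  2:{ apply set_ext; intros x; split.
      - intros H0. destruct (not_all_ex_not _ _ (Hemp x)) as [n Hn].
        induction n; [contradiction |].
        destruct (classic (B n x)) as [H | H]; [exists n; split |]; auto.
      - intros [n [Hn _]]. apply (Hmono O n); [lia | auto]. }
  assert (Hpart : forall n, sum_f_R0 (fun n => P (D n)) n = P (B O) - P (B (S n))).
  { assert (Hsp : forall n, P (B n) = P (B (S n)) + P (D n)).
    { intros n. rewrite (prob_split (B n) (B (S n))); auto.
      f_equal. f_equal. apply set_ext; intros x; split; [tauto | auto]. }
    induction n; simpl; [rewrite (Hsp O); ring |].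
    rewrite IHn, (Hsp (S n)); ring. }
  destruct (Hsum eps Heps) as [N HN]. exists (S N). intros [| n] Hm; [lia |].
  specialize (HN n ltac:(lia)). rewrite Hpart in HN.
  unfold R_dist in HN. apply Rabs_def2 in HN. lra.
Qed.

End Probability.

Lemma sigma_union {X : Type} (C : set (set X)) (A : nat -> set X) :
  (forall n, fam_sigma C (A n)) -> fam_sigma C (fun x => exists n, A n x).
Proof.
  intros H. destruct (functional_choice _ H) as [f Hf].
  exists (fun k => f (fst (Cantor.of_nat k)) (snd (Cantor.of_nat k))). split.
  - intros k; apply Hf.
  - intros x; split.
    + intros [n Hn]. apply (proj2 (Hf n)) in Hn. destruct Hn as [m Hm].
      exists (Cantor.to_nat (n, m)). rewrite Cantor.cancel_of_to. auto.
    + intros [k Hk]. exists (fst (Cantor.of_nat k)). apply (proj2 (Hf _)). eauto.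
Qed.

Lemma sigma_inter2 {X : Type} (C : set (set X)) :
  (forall A B, C A -> C B -> C (setI A B)) ->
  forall A B, fam_sigma C A -> fam_sigma C B -> fam_sigma C (fun x => A x /\ B x).
Proof.
  intros HC A B [f [Hf HfA]] [g [Hg HgB]].
  exists (fun k => setI (f (fst (Cantor.of_nat k))) (g (snd (Cantor.of_nat k)))). split.
  - intros k; apply HC; auto.
  - intros x; split.
    + intros [Ha Hb]. apply HfA in Ha; apply HgB in Hb.
      destruct Ha as [n Hn]; destruct Hb as [m Hm].
      exists (Cantor.to_nat (n, m)). rewrite Cantor.cancel_of_to. split; auto.
    + intros [k [H1 H2]]. split; [apply HfA | apply HgB]; eauto.
Qed.

Lemma sigma_of {X : Type} (C : set (set X)) A : C A -> fam_sigma C A.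
Proof.
  intros H; exists (fun _ => A); split; auto.
  intros x; split; [exists O | intros [_ ?]]; auto.
Qed.

Lemma delta_of {X : Type} (C : set (set X)) A : C A -> fam_delta C A.
Proof.
  intros H; exists (fun _ => A); split; auto.
  intros x; split; [auto | intros Hx; apply (Hx O)].
Qed.

Lemma compl_inner {X : Type} (E : set (set X)) K :
  fam_sigma (fam_int E) K -> fam_delta (fam_ext E) (fun x => ~ K x).
Proof.
  intros [f [Hf HK]]. destruct (functional_choice _ Hf) as [g Hg].
  exists (fun n x => exists m, g n m x). split.
  - intros n. exists (g n). split; [apply Hg | tauto].
  - intros x; split.
    + intros H n. apply NNPP; intros H1. apply H, HK. exists n.
      apply (proj2 (Hg n)). intros m Hm; apply H1; eauto.
    + intros H H1. apply HK in H1. destruct H1 as [n Hn].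
      rewrite (proj2 (Hg n)) in Hn. destruct (H n) as [m Hm]. eapply Hn; eauto.
Qed.

Lemma compl_outer {X : Type} (E : set (set X)) L :
  fam_delta (fam_ext E) L -> fam_sigma (fam_int E) (fun x => ~ L x).
Proof.
  intros [f [Hf HL]]. destruct (functional_choice _ Hf) as [g Hg].
  exists (fun n x => forall m, ~ g n m x). split.
  - intros n. exists (g n). split; [apply Hg | tauto].
  - intros x; split.
    + intros H. apply NNPP; intros H1. apply H, HL. intros n. apply (proj2 (Hg n)).
      apply NNPP; intros H2. apply H1. exists n. intros m Hm. apply H2; eauto.
    + intros [n Hn] H. rewrite HL in H. specialize (H n).
      rewrite (proj2 (Hg n)) in H. destruct H as [m Hm]. eapply Hn; eauto.
Qed.

Lemma delta_sigma_decreasing {X : Type} (C : set (set X)) :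
  (forall A B, C A -> C B -> C (setI A B)) ->
  forall L, fam_delta (fam_sigma C) L ->
  exists U : nat -> set X, (forall m, fam_sigma C (U m)) /\
    (forall m x, U (S m) x -> U m x) /\ (forall x, L x <-> forall m, U m x).
Proof.
  intros HC L [V [HV HL]].
  exists (fun m x => forall i, (i <= m)%nat -> V i x). split; [| split].
  - induction m.
    + replace (fun x => forall i, (i <= 0)%nat -> V i x) with (V O); auto.
      apply set_ext; intros x; split; [intros H i Hi; replace i with O by lia |]; auto.
    + replace (fun x => forall i, (i <= S m)%nat -> V i x)
        with (fun x => (forall i, (i <= m)%nat -> V i x) /\ V (S m) x).
      * apply sigma_inter2; auto.
      * apply set_ext; intros x; split.
        -- intros [H1 H2] i Hi.
           destruct (Nat.eq_dec i (S m)) as [-> |]; auto. apply H1; lia.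
        -- intros H; split; auto.
  - intros m x H i Hi; auto.
  - intros x; rewrite HL; split; auto. intros H m; apply (H m m); auto.
Qed.

Section FamiliesMeasurable.
Variables (X : Type) (G C : set (set X)).
Hypothesis HG : sigma_algebra G.
Hypothesis HC : forall A, C A -> G A.

Lemma sigma_meas A : fam_sigma C A -> G A.
Proof.
  intros [f [Hf HA]]. replace A with (fun x => exists n, f n x).
  - apply sa_union; auto.
  - apply set_ext; intros; rewrite HA; tauto.
Qed.

Lemma delta_meas A : fam_delta C A -> G A.
Proof.
  intros [f [Hf HA]]. replace A with (fun x => forall n, f n x).
  - apply sa_inter; auto.
  - apply set_ext; intros; rewrite HA; tauto.
Qed.

Lemma int_meas A : fam_int C A -> G A.
Proof.
  intros [f [Hf HA]]. replace A with (fun x => forall n, ~ f n x).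
  - apply sa_inter; auto. intros; apply sa_compl; auto.
  - apply set_ext; intros; rewrite HA; tauto.
Qed.

End FamiliesMeasurable.

Definition hit_event {Om X : Type} (rho : Om -> CS X) (D : set X) : set Om :=
  fun w => exists x, proj1_sig (rho w) x /\ D x.

Lemma card_ge_0 {X : Type} (D : set X) : card_ge D O.
Proof. exists nil; simpl; repeat split; [constructor | intros _ []]. Qed.

Lemma Ncard_nonempty {X : Type} (D : set X) :
  (exists y, D y) <-> exists k, Ncard D k /\ k <> Some O.
Proof.
  split.
  - intros [y Hy]. assert (H1 : card_ge D 1).
    { exists (cons y nil). repeat split; [repeat constructor; intros [] |].
      intros x [<- | []]; auto. }
    destruct (classic (forall n, card_ge D n)) as [H | H].
    + exists None; split; [exact H | discriminate].
    + apply not_all_ex_not in H; destruct H as [n Hn].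
      induction n; [exfalso; apply Hn, card_ge_0 |].
      destruct (classic (card_ge D n)) as [H | H]; auto.
      exists (Some n); split; [split; auto |].
      intros Heq; inversion Heq; subst; contradiction.
  - intros [[n |] [Hk Hne]].
    + destruct Hk as [[l [_ [Hl Hin]]] _]. destruct l as [| y l].
      * simpl in Hl; subst; congruence.
      * exists y; apply Hin; simpl; auto.
    + destruct (Hk 1%nat) as [[| y l] [_ [Hl Hin]]]; [discriminate |].
      exists y; apply Hin; simpl; auto.
Qed.

(* For a cr-set rho and a measurable D, {rho hits D} = {N_D(rho) <> 0} is an event. *)
Lemma hit_event_meas {Om X : Type} (F : set (set Om)) (SS : set (set X))
  (rho : Om -> CS X) D :
  is_cr_set F SS rho -> SS D -> F (hit_event rho D).
Proof.
  intros Hrho HD.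
  set (B := fun M : CS X => exists k, Ncard (setI D (proj1_sig M)) k /\ k <> Some O).
  replace (hit_event rho D) with (fun w => B (rho w)).
  - apply Hrho. intros G HG Hgen. apply Hgen.
    exists D; split; auto. exists (fun k => k <> Some O). tauto.
  - apply set_ext; intros w. unfold B, hit_event. rewrite <- Ncard_nonempty.
    unfold setI. firstorder.
Qed.

Lemma finite_eventually_avoids {X : Type} (D : nat -> set X) (l : list X) :
  (forall m x, D (S m) x -> D m x) ->
  (forall x, In x l -> ~ forall m, D m x) -> exists M, forall x, In x l -> ~ D M x.
Proof.
  intros Hdec. assert (Hmono : forall m n x, (m <= n)%nat -> D n x -> D m x)
    by (intros m n x Hmn; induction Hmn; auto).
  induction l as [| a l IH]; intros H; [exists O; intros x [] |].
  destruct IH as [M1 HM1]; [intros x Hx; apply H; simpl; auto |].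
  destruct (not_all_ex_not _ _ (H a (or_introl eq_refl))) as [Ma HMa].
  exists (Nat.max M1 Ma). intros x [<- | Hx] HD.
  - apply HMa. apply (Hmono Ma (Nat.max M1 Ma)); auto; lia.
  - apply (HM1 x Hx). apply (Hmono _ (Nat.max M1 Ma)); auto; lia.
Qed.

Lemma eventually_below_uniform (a : nat -> nat -> R) eps :
  (forall k, exists M, forall m, (m >= M)%nat -> a k m < eps) ->
  forall J, exists M, forall m, (m >= M)%nat -> forall k, (k <= J)%nat -> a k m < eps.
Proof.
  intros Ha. induction J.
  - destruct (Ha O) as [M HM]. exists M. intros m Hm k Hk. replace k with O by lia. auto.
  - destruct IHJ as [M1 HM1]. destruct (Ha (S J)) as [M2 HM2].
    exists (Nat.max M1 M2). intros m Hm k Hk.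
    destruct (Nat.eq_dec k (S J)) as [-> |]; [apply HM2 | apply HM1]; lia.
Qed.

Lemma geometric_le e N : 0 <= e -> sum_f_R0 (fun n => (/2) ^ (S n) * e) N <= e.
Proof.
  intros He.
  assert (Hsum : sum_f_R0 (fun n => (/2) ^ (S n) * e) N = e * (1 - (/2) ^ (S N))).
  { induction N; [simpl; field |]. rewrite tech5, IHN. simpl. field. }
  rewrite Hsum. assert (0 < (/2) ^ (S N)) by (apply pow_lt; lra). nra.
Qed.

Lemma eq0_of_le_inv_succ x k : 0 <= x ->
  (forall j, (j >= k)%nat -> x <= / INR (S j)) -> x = 0.
Proof.
  intros Hx H. destruct (Rle_lt_or_eq_dec _ _ Hx) as [Hlt |]; auto.
  destruct (INR_unbounded (/ x)) as [n Hn].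
  set (j := Nat.max n k). specialize (H j ltac:(lia)).
  assert (Hle : INR n <= INR j) by (apply le_INR; lia).
  assert (HS : INR j < INR (S j)) by (apply lt_INR; lia).
  assert (Hpos : 0 < INR (S j)) by (apply lt_0_INR; lia).
  assert (x * INR (S j) <= 1).
  { apply (Rmult_le_compat_r (INR (S j))) in H; [| lra]. rewrite Rinv_l in H; lra. }
  assert (x * / x = 1) by (field; lra).
  assert (x * / x < x * INR (S j)) by (apply Rmult_lt_compat_l; lra). lra.
Qed.

(* Throughout, pik is the sequence of finite cr-sets whose union is the
   constructive cr-set of the theorem. *)
Section Approximation.
Variables (Om : Type) (F : set (set Om)) (P : set Om -> R)
  (St : Type) (SS : set (set St)) (E : set (set St)) (pik : nat -> Om -> CS St).
Hypothesis HP : is_probability F P.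
Hypothesis HSS : sigma_algebra SS.
Hypothesis HEI : forall A B, E A -> E B -> E (setI A B).
Hypothesis HSE : forall A, SS A <-> sigma_gen E A.
Hypothesis HE0 : E (fun _ => False).
Hypothesis HEK : forall A, E A -> fam_sigma (fam_int E) A.
Hypothesis Hpik : forall k, is_finite_cr_set F SS (pik k).

Definition null (D : set St) : Prop := forall k, P (hit_event (pik k) D) = 0.

Definition approximates (A K L : set St) : Prop :=
  fam_sigma (fam_int E) K /\ fam_delta (fam_ext E) L /\
  subset K A /\ subset A L /\ null (setD L K).

Definition approximable (A : set St) : Prop := exists K L, approximates A K L.

Lemma E_meas A : E A -> SS A.
Proof. intros HA. apply HSE. intros G _ HG; auto. Qed.

Lemma inner_meas K : fam_sigma (fam_int E) K -> SS K.
Proof. apply sigma_meas; auto. apply int_meas; auto. apply E_meas. Qed.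

Lemma outer_meas L : fam_delta (fam_ext E) L -> SS L.
Proof. apply delta_meas; auto. apply sigma_meas; auto. apply E_meas. Qed.

Lemma gap_meas K L : fam_sigma (fam_int E) K -> fam_delta (fam_ext E) L -> SS (setD L K).
Proof. intros; apply sa_diff; auto using inner_meas, outer_meas. Qed.

Lemma hit_meas k D : SS D -> F (hit_event (pik k) D).
Proof. intros; apply (hit_event_meas F SS); auto. apply Hpik. Qed.

Lemma null_subset D D' : SS D -> SS D' -> subset D' D -> null D -> null D'.
Proof.
  intros HD HD' Hs Hn k. apply Rle_antisym.
  - rewrite <- (Hn k). apply (prob_mono _ F); auto using hit_meas.
    intros w [x [H1 H2]]. exists x; auto.
  - apply (prob_ge0 _ F P); auto using hit_meas.
Qed.

Lemma null_empty D : (forall x, ~ D x) -> null D.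
Proof.
  intros H k. replace (hit_event (pik k) D) with (fun _ : Om => False).
  - apply (prob_empty _ F); auto.
  - apply set_ext; intros w; unfold hit_event; firstorder.
Qed.

Lemma null_union (D : nat -> set St) : (forall n, SS (D n)) -> (forall n, null (D n)) ->
  null (fun x => exists n, D n x).
Proof.
  intros HD Hn k.
  replace (hit_event (pik k) (fun x => exists n, D n x))
    with (fun w => exists n, hit_event (pik k) (D n) w).
  - apply (prob_null_union _ F); auto using hit_meas. intros n; apply Hn.
  - apply set_ext; intros w; unfold hit_event; firstorder.
Qed.

(* Since each pik k is finite, a decreasing sequence of sets with empty limit is
   eventually hit with small probability, uniformly in finitely many k. *)
Lemma hit_vanish (D : nat -> set St) : (forall m, SS (D m)) ->
  (forall m x, D (S m) x -> D m x) -> (forall x, ~ forall m, D m x) ->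
  forall J eps, eps > 0 ->
  exists m, forall k, (k <= J)%nat -> P (hit_event (pik k) (D m)) < eps.
Proof.
  intros HD Hdec Hemp J eps Heps.
  assert (Hk : forall k, exists M, forall m, (m >= M)%nat ->
            P (hit_event (pik k) (D m)) < eps).
  { intros k. apply (prob_vanish _ F); auto using hit_meas.
    - intros m w [x [H1 H2]]. exists x; auto.
    - intros w Hall. destruct (proj2 (Hpik k) w) as [l Hl].
      destruct (finite_eventually_avoids D l Hdec) as [M HM].
      + intros x _; apply Hemp.
      + destruct (Hall M) as [x [H1 H2]]. apply (HM x); auto. apply Hl; auto. }
  destruct (eventually_below_uniform _ eps Hk J) as [M HM].
  exists M. apply HM; lia.
Qed.

Lemma null_of_small_covers (D : set St) (B : nat -> nat -> set St) :
  SS D -> (forall n j, SS (B n j)) -> (forall j, subset D (fun x => exists n, B n j x)) ->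
  (forall n j k, (k <= j)%nat ->
     P (hit_event (pik k) (B n j)) <= (/2) ^ (S n) * / INR (S j)) ->
  null D.
Proof.
  intros HD HB Hcover Hsmall k.
  apply (eq0_of_le_inv_succ _ k); [apply (prob_ge0 _ F P); auto using hit_meas |].
  intros j Hj.
  apply Rle_trans with (P (fun w => exists n, hit_event (pik k) (B n j) w)).
  - apply (prob_mono _ F); auto using hit_meas.
    + apply sa_union; [apply prob_sa with P |]; auto using hit_meas.
    + intros w [x [Hx HDx]]. destruct (Hcover j x HDx) as [n Hn]. exists n, x; auto.
  - apply (prob_union_le _ F P HP _ (fun n => (/2) ^ (S n) * / INR (S j)));
      auto using hit_meas.
    intros N. apply geometric_le. left. apply Rinv_0_lt_compat, lt_0_INR; lia.
Qed.

Lemma outer_envelope (Ln : nat -> set St) : (forall n, fam_delta (fam_ext E) (Ln n)) ->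
  exists L, fam_delta (fam_ext E) L /\ (forall n, subset (Ln n) L) /\
    null (setD L (fun x => exists n, Ln n x)).
Proof.
  intros HLn.
  destruct (functional_choice _ (fun n => delta_sigma_decreasing E HEI (Ln n) (HLn n)))
    as [U HU].
  assert (HUmeas : forall n m, SS (U n m))
    by (intros n m; apply (sigma_meas _ SS E); auto; [apply E_meas | apply HU]).
  assert (HLmeas : forall n, SS (Ln n)) by (intros; apply outer_meas; auto).
  (* m(n, j): a stage of U n whose excess over Ln n is hit with probability
     below 2^{-(n+1)}/(j+1) by each pik k, k <= j *)
  assert (Hstage : forall nj : nat * nat, exists m, forall k, (k <= snd nj)%nat ->
    P (hit_event (pik k) (setD (U (fst nj) m) (Ln (fst nj))))
      <= (/2) ^ (S (fst nj)) * / INR (S (snd nj))).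
  { intros [n j]. simpl.
    destruct (hit_vanish (fun m => setD (U n m) (Ln n))) with (J := j)
      (eps := (/2) ^ (S n) * / INR (S j)) as [m Hm].
    - intros m; apply sa_diff; auto.
    - intros m x [H1 H2]; split; [apply (proj1 (proj2 (HU n))) |]; auto.
    - intros x Hx. apply (proj2 (Hx O)), (proj2 (proj2 (HU n))). intros m; apply Hx.
    - apply Rmult_lt_0_compat; [apply pow_lt; lra |].
      apply Rinv_0_lt_compat, lt_0_INR; lia.
    - exists m. intros; left; auto. }
  destruct (functional_choice _ Hstage) as [mm Hmm].
  exists (fun x => forall j, exists n, U n (mm (n, j)) x). split; [| split].
  - exists (fun j x => exists n, U n (mm (n, j)) x). split; [| tauto].
    intros j; apply sigma_union; intros n; apply HU.
  - intros n x Hx j. exists n. apply (proj2 (proj2 (HU n))); auto.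
  - apply (null_of_small_covers _ (fun n j => setD (U n (mm (n, j))) (Ln n))).
    + apply sa_diff; auto.
      * apply sa_inter; auto. intros j; apply sa_union; auto.
      * apply sa_union; auto.
    + intros n j; apply sa_diff; auto.
    + intros j x [HLx HnL]. destruct (HLx j) as [n Hn].
      exists n. split; auto. intros H; apply HnL; eauto.
    + intros n j k Hk. apply (Hmm (n, j)); auto.
Qed.

Lemma approximable_E A : E A -> approximable A.
Proof.
  intros HA. exists A, A. repeat split; auto.
  - apply delta_of, sigma_of; auto.
  - intros x H; auto.
  - intros x H; auto.
  - apply null_empty. unfold setD; tauto.
Qed.

Lemma approximable_compl A : approximable A -> approximable (fun x => ~ A x).
Proof.
  intros [K [L [HK [HL [HKA [HAL Hn]]]]]].
  exists (fun x => ~ L x), (fun x => ~ K x). repeat split.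
  - apply compl_outer; auto.
  - apply compl_inner; auto.
  - intros x H1 H2; apply H1, HAL; auto.
  - intros x H1 H2; apply H1, HKA; auto.
  - replace (setD (fun x => ~ K x) (fun x => ~ L x)) with (setD L K); auto.
    apply set_ext; intros x; unfold setD; split; [tauto |].
    intros [H1 H2]; split; auto. apply NNPP; auto.
Qed.

Lemma approximable_union (A : nat -> set St) :
  (forall n, approximable (A n)) -> approximable (fun x => exists n, A n x).
Proof.
  intros HA.
  assert (HA' : forall n, exists KL : set St * set St, approximates (A n) (fst KL) (snd KL))
    by (intros n; destruct (HA n) as [K [L H]]; exists (K, L); exact H).
  destruct (functional_choice _ HA') as [KL HKL].
  set (Kn := fun n => fst (KL n)). set (Ln := fun n => snd (KL n)).
  assert (HKn : forall n, fam_sigma (fam_int E) (Kn n)) by (intros n; apply HKL).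
  assert (HLn : forall n, fam_delta (fam_ext E) (Ln n)) by (intros n; apply HKL).
  destruct (outer_envelope Ln HLn) as [L [HL [HLnL Hnull]]].
  exists (fun x => exists n, Kn n x), L. repeat split; auto.
  - apply sigma_union; auto.
  - intros x [n Hn]. exists n. apply (HKL n); auto.
  - intros x [n Hn]. apply (HLnL n), (HKL n); auto.
  - (* L \ K lies in (L \ U Ln) together with the gaps Ln n \ Kn n *)
    set (gap := fun i => match i with
                         | O => setD L (fun x => exists n, Ln n x)
                         | S n => setD (Ln n) (Kn n) end).
    assert (Hgap : forall i, SS (gap i)).
    { intros [| n]; simpl; auto using gap_meas.
      apply sa_diff; auto using outer_meas. apply sa_union; auto using outer_meas. }
    apply (null_subset (fun x => exists i, gap i x)).
    + apply sa_union; auto.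
    + apply gap_meas; auto. apply sigma_union; auto.
    + intros x [HLx HKx]. destruct (classic (exists n, Ln n x)) as [[n Hn] | Hn].
      * exists (S n). split; auto. intros H; apply HKx; exists n; auto.
      * exists O. split; auto.
    + apply null_union; auto. intros [| n]; [auto | apply (HKL n)].
Qed.

Lemma approximable_sa : sigma_algebra approximable.
Proof.
  split; [| split].
  - replace (@setT St) with (fun x => ~ (fun _ : St => False) x).
    + apply approximable_compl, approximable_E; auto.
    + apply set_ext; unfold setT; tauto.
  - apply approximable_compl.
  - apply approximable_union.
Qed.

Lemma approximable_meas A : SS A -> approximable A.
Proof.
  intros HA. apply (proj1 (HSE A) HA); [apply approximable_sa | apply approximable_E].
Qed.

Lemma hitting_null (pi : Om -> CS St) D :
  (forall w x, proj1_sig (pi w) x <-> exists k, proj1_sig (pik k w) x) ->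
  SS D -> null D -> hitting P pi D = 0.
Proof.
  intros Hpi HD Hn. unfold hitting.
  replace (fun w => exists x, proj1_sig (pi w) x /\ D x)
    with (fun w => exists k, hit_event (pik k) D w).
  - apply (prob_null_union _ F); auto using hit_meas.
  - apply set_ext; intros w; unfold hit_event; split.
    + intros [k [x [H1 H2]]]. exists x; split; auto. apply Hpi; eauto.
    + intros [x [H1 H2]]. apply Hpi in H1. destruct H1 as [k Hk]. eauto.
Qed.

End Approximation.

Theorem lemma5p6 (Om : Type) (F : set (set Om)) (P : set Om -> R)
  (S : Type) (SS : set (set S)) (E : set (set S)) (pi : Om -> CS S) :
  is_probability F P ->
  sigma_algebra SS ->
  (forall A B, E A -> E B -> E (setI A B)) ->
  (forall A, SS A <-> sigma_gen E A) ->
  E (fun _ => False) ->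
  (forall A, E A -> fam_sigma (fam_int E) A) ->
  is_cr_set F SS pi ->
  constructive F SS pi ->
  forall A, SS A ->
    exists K L, fam_sigma (fam_int E) K /\ fam_delta (fam_ext E) L /\
      subset K A /\ subset A L /\ hitting P pi (setD L K) = 0.
Proof.
  intros HP HSS HEI HSE HE0 HEK _ [pik [Hpik Hpi]] A HA.
  destruct (approximable_meas Om F P S SS E pik HP HSS HEI HSE HE0 HEK Hpik A HA)
    as [K [L [HK [HL [HKA [HAL Hnull]]]]]].
  exists K, L. repeat split; auto.
  apply (hitting_null Om F P S SS pik); auto.
  apply (gap_meas S SS E); auto.
Qed.
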